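(* Let $d$ be a positive integer and let $n,m$ be such that $T_{n,m}$ is nonempty. Then the set of all $d$-locally most reliable two-terminal graphs near $1$ in $T_{n,m}$ is nonempty and equals $T_{n,m}^d(m)$.
   Context: All graphs are finite, simple and undirected. A two-terminal graph is a graph $G$ together with two distinguished vertices $s,t$ (the terminals). Two two-terminal graphs are isomorphic if there is a graph isomorphism between them mapping the set of terminals onto the set of terminals. $T_{n,m}$ denotes the set of all pairwise nonisomorphic two-terminal graphs with $n$ vertices and $m$ edges. For a positive integer $d$, a $d$-pathset of a two-terminal graph $G$ is a spanning subgraph of $G$ containing a path of length (number of edges) at most $d$ joining $s$ and $t$; $N_i^d(G)$ is the number of $d$-pathsets of $G$ with exactly $i$ edges. For $\rho\in[0,1]$, $R_G^d(\rho)$ is the probability that the random spanning subgraph obtained from $G$ by deleting each edge independently with probability $\rho$ is a $d$-pathset; equivalently $R_G^d(\rho)=\sum_{i=1}^m N_i^d(G)(1-\rho)^i\rho^{m-i}$. $G\in T_{n,m}$ is a $d$-locally most reliable two-terminal graph near $1$ if there exists $\delta>0$ such that $R_G^d(\rho)\geq R_H^d(\rho)$ for every $H\in T_{n,m}$ and every $\rho\in(1-\delta,1)$. Define $T_{n,m}^d(0)=T_{n,m}$ and, for $i\in\{0,1,\ldots,m-1\}$, $T_{n,m}^d(i+1)=\{G\in T_{n,m}^d(i): N_{i+1}^d(G)\geq N_{i+1}^d(H)\text{ for all }H\in T_{n,m}^d(i)\}$. *)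

From HB Require Import structures.
From mathcomp Require Import all_boot all_order all_algebra.
From mathcomp Require Import fingroup perm.
From mathcomp Require Import reals.
Set Implicit Arguments. Unset Strict Implicit. Unset Printing Implicit Defensive.
Import Order.TTheory GRing.Theory Num.Theory.

(* A two-terminal graph on the vertex set 'I_n, encoded as
   ((edge set, s), t); it is a valid (simple) two-terminal graph when every
   edge is a 2-element vertex set and s != t. *)
Definition ttg (n : nat) := ({set {set 'I_n}} * 'I_n * 'I_n)%type.

Definition edges n (G : ttg n) : {set {set 'I_n}} := G.1.1.
Definition term_s n (G : ttg n) : 'I_n := G.1.2.
Definition term_t n (G : ttg n) : 'I_n := G.2.

Definition valid_ttg n (G : ttg n) : bool :=
  [forall e in edges G, #|e| == 2] && (term_s G != term_t G).

Definition ttg_iso n (G H : ttg n) : Prop :=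
  exists f : {perm 'I_n},
    [set [set f x | x in e] | e : {set 'I_n} in edges G] = edges H /\
    [set f (term_s G); f (term_t G)] = [set term_s H; term_t H].

(* F (a set of edges, i.e. a spanning subgraph) contains a path of length
   (number of edges) at most d joining s and t: a sequence of distinct
   vertices s = v_0, v_1, ..., v_k = t with k <= d and {v_j, v_(j+1)} in F. *)
Definition has_short_path n (d : nat) (s t : 'I_n) (F : {set {set 'I_n}}) : bool :=
  [exists k : 'I_d.+1, [exists p : k.-tuple 'I_n,
     [&& uniq (s :: (p : seq 'I_n)), last s p == t &
         path (fun u v => [set u; v] \in F) s p]]].

Definition Npath n (d i : nat) (G : ttg n) : nat :=
  #|[set F in powerset (edges G) |
       (#|F| == i) && has_short_path d (term_s G) (term_t G) F]|.

Definition rel {R : realType} n (d : nat) (G : ttg n) (rho : R) : R :=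
  let m := #|edges G| in
  (\sum_(1 <= i < m.+1) (Npath d i G)%:R * (1 - rho) ^+ i * rho ^+ (m - i))%R.

Definition is_Tnm n (m : nat) (T : {set ttg n}) : Prop :=
  [/\ (forall G, G \in T -> valid_ttg G /\ #|edges G| = m),
      (forall G, valid_ttg G -> #|edges G| = m -> exists2 H, H \in T & ttg_iso G H)
    & (forall G H, G \in T -> H \in T -> ttg_iso G H -> G = H)].

Definition loc_most_reliable (R : realType) n (d : nat) (T : {set ttg n}) (G : ttg n) : Prop :=
  G \in T /\
  exists2 delta : R, (0 < delta)%R &
    forall H, H \in T -> forall rho : R, (1 - delta < rho)%R -> (rho < 1)%R ->
      (rel d H rho <= rel d G rho)%R.

Fixpoint Tseq n (d : nat) (T : {set ttg n}) (i : nat) : {set ttg n} :=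
  match i with
  | 0 => T
  | i'.+1 => [set G in Tseq d T i' |
               [forall H in Tseq d T i', Npath d i'.+1 H <= Npath d i'.+1 G]]
  end.

(* With x = 1 - rho, R_G^d(rho) = sum_i N_i^d(G) x^i (1 - x)^(m - i).  As
   x -> 0+ the term of lowest degree dominates, so for two graphs with m edges
   the sign of R_H^d - R_G^d near rho = 1 is the sign of the first nonzero
   difference N_i^d(H) - N_i^d(G): being more reliable near 1 is the
   lexicographic order on (N_1^d, ..., N_m^d).  The sets T_{n,m}^d(i) maximise
   N_1^d, N_2^d, ... in turn, so T_{n,m}^d(m) is the (nonempty) set of
   lexicographic maxima, i.e. of the locally most reliable graphs.  Nothing
   about paths is used. *)

From Pilot Require Import Defs.
From mathcomp Require Import all_boot all_order all_algebra.
From mathcomp Require Import fingroup perm.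
From mathcomp Require Import reals.
From mathcomp Require Import lra.
Set Implicit Arguments.
Unset Strict Implicit.
Unset Printing Implicit Defensive.
Import Order.TTheory GRing.Theory Num.Theory.
Local Open Scope ring_scope.

Lemma bernoulli_ineq (R : realDomainType) (y : R) n :
  -1 <= y -> 1 + n%:R * y <= (1 + y) ^+ n.
Proof.
move=> y_ge; elim: n => [|n IHn]; first by rewrite mul0r addr0 expr0.
have y1_ge0 : 0 <= 1 + y by lra.
rewrite exprS -natr1; apply: le_trans (ler_wpM2l y1_ge0 IHn).
have n_ge0 : 0 <= n%:R :> R by [].
nra.
Qed.

Section BernsteinSums.
Variable R : realFieldType.
Implicit Types (c : nat -> R) (x : R).

Lemma bernstein_sum_ge c k l m x : 0 <= x <= 1 ->
  - (x ^+ k * \sum_(k <= i < l) `|c i|) <=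
  \sum_(k <= i < l) c i * x ^+ i * (1 - x) ^+ (m - i).
Proof.
move=> /andP[x_ge0 x_le1]; rewrite mulr_sumr -sumrN.
apply: ler_sum_nat => i /andP[ki _].
have omx_ge0 : 0 <= 1 - x by lra.
suff : `|c i * x ^+ i * (1 - x) ^+ (m - i)| <= x ^+ k * `|c i|.
  by rewrite ler_norml => /andP[].
rewrite -mulrA normrM mulrC ger0_norm ?mulr_ge0 ?exprn_ge0 //.
apply: ler_wpM2r => //; rewrite -[leRHS]mulr1.
apply: ler_pM; rewrite ?exprn_ge0 //; first exact: ler_wiXn2l.
by apply: exprn_ile1; lra.
Qed.

(* By Bernoulli's inequality and [bernstein_sum_ge] the sum is at least
   [x^j (c j - x (m c j + B))], whence the choice of [delta]. *)
Lemma bernstein_sum_gt0_near0 c j m : (j <= m)%N -> 0 < c j ->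
  exists2 delta : R, 0 < delta & forall x, 0 < x -> x < delta ->
    0 < \sum_(j <= i < m.+1) c i * x ^+ i * (1 - x) ^+ (m - i).
Proof.
move=> jm cj_gt0; set B : R := \sum_(j.+1 <= i < m.+1) `|c i|.
have B_ge0 : 0 <= B by apply: sumr_ge0.
have m_ge0 : 0 <= m%:R :> R by [].
have D_gt0 : 0 < c j * m%:R + B + 1.
  by have := mulr_ge0 (ltW cj_gt0) m_ge0; lra.
exists (Num.min 1 (c j / (c j * m%:R + B + 1))).
  by rewrite lt_min ltr01 divr_gt0.
move=> x x_gt0; rewrite lt_min => /andP[x_lt1]; rewrite ltr_pdivlMr // => x_small.
rewrite big_ltn ?ltnS //.
have tail : - (x ^+ j * x * B) <= \sum_(j.+1 <= i < m.+1) c i * x ^+ i * (1 - x) ^+ (m - i).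
  by rewrite -exprSr bernstein_sum_ge ?ltW.
have xj_gt0 : 0 < x ^+ j by rewrite exprn_gt0.
have bernoulli : 1 - m%:R * x <= (1 - x) ^+ (m - j).
  apply: le_trans (@bernoulli_ineq _ (- x) (m - j) _); last by lra.
  rewrite mulrN lerD2l lerN2; apply: ler_wpM2r; first exact: ltW.
  by rewrite ler_nat leq_subr.
have lead_ge : c j * x ^+ j * (1 - m%:R * x) <= c j * x ^+ j * (1 - x) ^+ (m - j).
  have cxj_ge0 : 0 <= c j * x ^+ j by apply: mulr_ge0; apply: ltW.
  by rewrite -subr_ge0 -mulrBr mulr_ge0 // subr_ge0.
have : 0 < x ^+ j * (c j - x * (c j * m%:R + B)) by rewrite mulr_gt0 //; lra.
lra.
Qed.

End BernsteinSums.

Section NearOneFromBelow.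
Variable R : realFieldType.
Implicit Types P Q : R -> Prop.

Definition near1_left P : Prop :=
  exists2 delta : R, 0 < delta & forall rho, 1 - delta < rho -> rho < 1 -> P rho.

Lemma near1_left_mono P Q : (forall rho, P rho -> Q rho) -> near1_left P -> near1_left Q.
Proof. by move=> PQ [delta delta_gt0 hP]; exists delta => // rho r1 r2; apply/PQ/hP. Qed.

Lemma near1_left_and {P Q} :
  near1_left P -> near1_left Q -> near1_left (fun rho => P rho /\ Q rho).
Proof.
move=> [dP dP_gt0 hP] [dQ dQ_gt0 hQ]; exists (Num.min dP dQ).
  by rewrite lt_min dP_gt0.
move=> rho rho_gt rho_lt1; split; [apply: hP | apply: hQ] => //;
  by apply: le_lt_trans rho_gt; rewrite lerD2l lerN2 ge_min lexx ?orbT.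
Qed.

Lemma near1_left_all (A : eqType) (s : seq A) (P : A -> R -> Prop) :
  (forall a, a \in s -> near1_left (P a)) ->
  near1_left (fun rho => forall a, a \in s -> P a rho).
Proof.
elim: s => [|b s IHs] nearP; first by exists 1 => // rho _ _ a; rewrite in_nil.
have nearPs : near1_left (fun rho => forall a, a \in s -> P a rho).
  by apply: IHs => a a_s; apply: nearP; rewrite inE a_s orbT.
apply: near1_left_mono (near1_left_and (nearP b (mem_head b s)) nearPs) => rho.
by move=> [Pb Ps] a; rewrite inE => /predU1P[-> | /Ps].
Qed.

Lemma near1_left_witness P : near1_left P -> exists rho, P rho.
Proof.
by move=> [delta delta_gt0 hP]; exists (1 - delta / 2); apply: hP; lra.
Qed.

End NearOneFromBelow.

Definition relpoly (R : pzRingType) (c : nat -> R) (m : nat) (rho : R) : R :=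
  \sum_(1 <= i < m.+1) c i * (1 - rho) ^+ i * rho ^+ (m - i).

Lemma relpolyB (R : pzRingType) (c c' : nat -> R) m rho :
  relpoly (fun i => c i - c' i) m rho = relpoly c m rho - relpoly c' m rho.
Proof. by rewrite /relpoly -sumrB; apply: eq_bigr => i _; rewrite !mulrBl. Qed.

Lemma relpoly_gt0_near1 (R : realFieldType) (c : nat -> R) m j :
  (0 < j <= m)%N -> (forall i, (0 < i < j)%N -> c i = 0) -> 0 < c j ->
  near1_left (fun rho => 0 < relpoly c m rho).
Proof.
move=> /andP[j_gt0 jm] c_eq0 cj_gt0.
have [delta delta_gt0 near0] := bernstein_sum_gt0_near0 jm cj_gt0.
exists delta => // rho rho_gt rho_lt1.
rewrite /relpoly (big_cat_nat _ (n := j)) //=; last exact: leqW.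
rewrite big_nat_cond big1 ?add0r.
  by have := near0 (1 - rho); rewrite subKr; apply; lra.
by move=> i /andP[/andP[i_gt0 ij] _]; rewrite c_eq0 ?i_gt0 // !mul0r.
Qed.

Section LexicographicOrder.
Local Open Scope nat_scope.
Implicit Types a b : nat -> nat.

Definition eq_upto k a b : Prop := forall i, 0 < i <= k -> a i = b i.

Definition lex_lt k a b : Prop :=
  exists2 j, 0 < j <= k & eq_upto j.-1 a b /\ a j < b j.

Lemma eq_upto_sym k a b : eq_upto k a b -> eq_upto k b a.
Proof. by move=> eq_ab i /eq_ab. Qed.

Lemma eq_uptoS k a b : eq_upto k.+1 a b <-> eq_upto k a b /\ a k.+1 = b k.+1.
Proof.
split=> [eq_ab | [eq_ab eq_k1] i /andP[i_gt0]].
  split=> [i /andP[i_gt0 ik] | ]; apply: eq_ab; first by rewrite i_gt0 leqW.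
  by rewrite /= leqnn.
by rewrite leq_eqVlt ltnS => /predU1P[-> // | ik]; apply: eq_ab; rewrite i_gt0.
Qed.

Lemma lex_ltS k a b :
  lex_lt k.+1 a b <-> lex_lt k a b \/ eq_upto k a b /\ a k.+1 < b k.+1.
Proof.
split=> [[j /andP[j_gt0]] | [[j /andP[j_gt0 jk] lt_j] | [eq_ab lt_k1]]].
- rewrite leq_eqVlt ltnS => /predU1P[-> | jk] lt_j; first by right.
  by left; exists j; rewrite ?j_gt0.
- by exists j; rewrite ?j_gt0 ?leqW.
- by exists k.+1; rewrite /= ?leqnn.
Qed.

Lemma lex_trichotomy k a b : [\/ eq_upto k a b, lex_lt k a b | lex_lt k b a].
Proof.
elim: k => [|k [eq_ab | lt_ab | lt_ba]].
- by apply: Or31 => i /andP[i_gt0]; rewrite leqNgt i_gt0.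
- case: (ltngtP (a k.+1) (b k.+1)) => [lt_k1 | gt_k1 | eq_k1].
  + by apply/Or32/lex_ltS; right.
  + by apply/Or33/lex_ltS; right; split; first exact: eq_upto_sym.
  + by apply/Or31/eq_uptoS.
- by apply/Or32/lex_ltS; left.
- by apply/Or33/lex_ltS; left.
Qed.

End LexicographicOrder.

Lemma relpoly_eq_upto (R : pzRingType) a b m (rho : R) : eq_upto m a b ->
  relpoly (fun i => (a i)%:R) m rho = relpoly (fun i => (b i)%:R) m rho.
Proof. by move=> eq_ab; apply: eq_big_nat => i /andP[i_gt0 im]; rewrite eq_ab ?i_gt0. Qed.

Lemma relpoly_lex_lt_near1 (R : realFieldType) a b m : lex_lt m a b ->
  near1_left (fun rho : R =>
    relpoly (fun i => (a i)%:R) m rho < relpoly (fun i => (b i)%:R) m rho).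
Proof.
move=> [j jm [eq_ab lt_j]].
apply: near1_left_mono (relpoly_gt0_near1 (c := fun i => (b i)%:R - (a i)%:R) jm _ _).
- by move=> rho; rewrite relpolyB subr_gt0.
- by move=> i /andP[i_gt0 ij]; rewrite eq_ab ?subrr // i_gt0 -ltnS prednK // (ltn_trans i_gt0).
- by rewrite subr_gt0 ltr_nat.
Qed.

Section LexicographicFiltration.
Local Open Scope nat_scope.
Variables (n d : nat) (T : {set ttg n}).
Implicit Types (G H : ttg n) (k : nat).

Local Notation N G := (Npath d ^~ G).

Lemma Tseq_subset k : Tseq d T k \subset T.
Proof.
elim: k => [|k IHk] //=; apply: subset_trans IHk.
by apply/subsetP => G; rewrite inE => /andP[].
Qed.

Lemma Tseq_eq_upto k G H : G \in Tseq d T k -> H \in Tseq d T k -> eq_upto k (N G) (N H).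
Proof.
elim: k G H => [|k IHk] G H; first by move=> _ _ i /andP[i_gt0]; rewrite leqNgt i_gt0.
rewrite /= !inE => /andP[Gk /forall_inP maxG] /andP[Hk /forall_inP maxH].
apply/eq_uptoS; split; first exact: IHk.
by apply/eqP; rewrite eqn_leq maxG ?maxH.
Qed.

Lemma Tseq_eq_upto_in k G H :
  G \in Tseq d T k -> H \in T -> eq_upto k (N G) (N H) -> H \in Tseq d T k.
Proof.
elim: k => [//|k IHk]; rewrite /= !inE => /andP[Gk /forall_inP maxG] HT /eq_uptoS[eq_GH eq_k1].
rewrite IHk //=; apply/forall_inP => H' H'k.
by rewrite -eq_k1 maxG.
Qed.

Lemma Tseq_lex_max k G H : G \in Tseq d T k -> H \in T -> ~ lex_lt k (N G) (N H).
Proof.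
elim: k => [_ _ [j /andP[j_gt0]] | k IHk]; first by rewrite leqNgt j_gt0.
rewrite /= inE => /andP[Gk /forall_inP maxG] HT /lex_ltS[/(IHk Gk HT) // | [eq_GH lt_k1]].
have Hk := Tseq_eq_upto_in Gk HT eq_GH.
by move: (maxG H Hk); rewrite leqNgt lt_k1.
Qed.

Lemma Tseq_notin_lex k G :
  G \in T -> G \notin Tseq d T k -> exists2 H, H \in T & lex_lt k (N G) (N H).
Proof.
elim: k => [|k IHk] GT; first by rewrite /= GT.
rewrite /= inE negb_and; have [Gk | Gnk] := boolP (G \in Tseq d T k) => /= [|_].
  move=> /forall_inPn[H Hk]; rewrite -ltnNge => lt_k1.
  exists H; first exact: (subsetP (Tseq_subset k)).
  by apply/lex_ltS; right; split; first exact: Tseq_eq_upto.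
by have [H HT lt_GH] := IHk GT Gnk; exists H => //; apply/lex_ltS; left.
Qed.

Lemma Tseq_neq0 k : T != set0 -> Tseq d T k != set0.
Proof.
move=> T_neq0; elim: k => [//|k /set0Pn[G0 G0k]].
have [G Gk maxG] := arg_maxnP (Npath d k.+1) G0k.
apply/set0Pn; exists G; rewrite /= inE; apply/andP; split=> //.
by apply/forall_inP => H /maxG.
Qed.

End LexicographicFiltration.

Section Reliability.
Variables (R : realType) (n d m : nat) (T : {set ttg n}).
Hypothesis T_size : forall G, G \in T -> #|edges G| = m.
Implicit Types G H : ttg n.

Lemma relE G (rho : R) :
  G \in T -> Defs.rel d G rho = relpoly (fun i => (Npath d i G)%:R) m rho.
Proof. by move/T_size <-. Qed.

Lemma loc_most_reliableP G :
  loc_most_reliable R d T G <->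
  G \in T /\
  near1_left (fun rho : R => forall H, H \in T -> Defs.rel d H rho <= Defs.rel d G rho).
Proof.
split=> [[GT [delta delta_gt0 maxG]] | [GT [delta delta_gt0 maxG]]]; split=> //.
  by exists delta => // rho r1 r2 H HT; apply: maxG.
by exists delta => // H HT rho r1 r2; apply: maxG.
Qed.

Lemma Tseq_rel_max_near1 G H : G \in Tseq d T m -> H \in T ->
  near1_left (fun rho : R => Defs.rel d H rho <= Defs.rel d G rho).
Proof.
move=> Gm HT; have GT := subsetP (Tseq_subset d T m) G Gm.
have [eq_HG | lt_HG | lt_GH] := lex_trichotomy m (Npath d ^~ H) (Npath d ^~ G).
- by exists 1 => // rho _ _; rewrite !relE // (relpoly_eq_upto _ eq_HG).
- apply: near1_left_mono (relpoly_lex_lt_near1 R lt_HG) => rho.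
  by rewrite !relE //; apply: ltW.
- by case: (Tseq_lex_max Gm HT lt_GH).
Qed.

Lemma Tseq_loc_most_reliable G : G \in Tseq d T m -> loc_most_reliable R d T G.
Proof.
move=> Gm; apply/loc_most_reliableP; split; first exact: (subsetP (Tseq_subset d T m)).
have near_maxG H : H \in enum T ->
    near1_left (fun rho : R => Defs.rel d H rho <= Defs.rel d G rho).
  by rewrite mem_enum; apply: Tseq_rel_max_near1.
apply: near1_left_mono (near1_left_all near_maxG) => rho maxG H HT.
by apply: maxG; rewrite mem_enum.
Qed.

Lemma loc_most_reliable_Tseq G : loc_most_reliable R d T G -> G \in Tseq d T m.
Proof.
move=> /loc_most_reliableP[GT maxG]; apply/negPn/negP => Gnm.
have [H HT lt_GH] := Tseq_notin_lex GT Gnm.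
have H_beats : near1_left (fun rho : R => Defs.rel d G rho < Defs.rel d H rho).
  by apply: near1_left_mono (relpoly_lex_lt_near1 R lt_GH) => rho; rewrite !relE.
have [rho [/(_ H HT) le_HG lt_GH_rho]] := near1_left_witness (near1_left_and maxG H_beats).
by move: le_HG; rewrite leNgt lt_GH_rho.
Qed.

End Reliability.

Local Close Scope ring_scope.

Theorem lemma1 (R : realType) (d n m : nat) (T : {set ttg n}) :
  0 < d -> is_Tnm m T -> T != set0 ->
  (exists G, loc_most_reliable R d T G) /\
  (forall G, loc_most_reliable R d T G <-> G \in Tseq d T m).
Proof.
move=> _ [T_valid _ _] T_neq0.
have T_size G : G \in T -> #|edges G| = m by case/T_valid.
split=> [|G]; last first.
  by split; [apply: loc_most_reliable_Tseq | apply: Tseq_loc_most_reliable].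
have /set0Pn[G Gm] := Tseq_neq0 d m T_neq0.
by exists G; exact (Tseq_loc_most_reliable R T_size Gm).
Qed.
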